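(* Consider a two-asset G3M with fee parameter $\gamma\in(0,1)$ and a reference price process $(S_t)_{t\ge 0}$, $S_t>0$. Arbitrageurs arrive at deterministic times $0=\tau_0<\tau_1<\dots<\tau_m\le T$. The pool price $P_t>0$ is constant on each interval $[\tau_i,\tau_{i+1})$ (and on $[\tau_m,\infty)$), and at each arrival time it is updated so that, writing $Z_t=\ln(S_t/P_t)$ and $Z_{\tau_i^-}:=\ln S_{\tau_i}-\ln P_{\tau_{i-1}}$ for $i\ge1$ (and $Z_{0^-}:=\ln S_0-\ln P_0$), $$Z_{\tau_i}=\max\{\min\{Z_{\tau_i^-},-\ln\gamma\},\ln\gamma\}.$$ Assume $\gamma P_0\le S_0\le\gamma^{-1}P_0$. Define $$J_i=\max\{\min\{Z_{\tau_i^-},-\ln\gamma\},\ln\gamma\}-Z_{\tau_i^-},\quad L_t=\sum_{i:\tau_i\le t}\{J_i\}^+,\quad U_t=\sum_{i:\tau_i\le t}\{J_i\}^-,$$ where $\{a\}^+=\max\{a,0\}$ and $\{a\}^-=\max\{-a,0\}$. Then for all $t\ge0$, $$\ln P_t=\ln P_0+U_t-L_t,\qquad Z_t=\ln S_t-\ln P_0+L_t-U_t,$$ and moreover $$L_t=\sup_{i:\tau_i\le t}\big(-\ln(\gamma P_0)+\ln S_{\tau_i}-U_{\tau_i}\big)^-,\qquad U_t=\sup_{i:\tau_i\le t}\big(\ln(\gamma^{-1}P_0)-\ln S_{\tau_i}-L_{\tau_i}\big)^-,$$ where $(a)^-=\max\{-a,0\}$.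
   Context: Setting: a G3M (geometric mean market maker) pool for assets $X,Y$ with proportional fee $1-\gamma$; $P_t$ is the pool price of $X$ in units of $Y$, $S_t$ the price of $X$ in units of $Y$ on a frictionless external reference market with infinite liquidity. There are no noise traders, so the pool price changes only at arbitrageur arrival times, where arbitrageurs trade just enough to bring the mispricing $Z=\ln(S/P)$ back into the no-arbitrage interval $[\ln\gamma,-\ln\gamma]$ (and do nothing if it is already inside), as encoded in the update rule above. *)

From Stdlib Require Import Reals Lra.
Open Scope R_scope.

Definition clip (g z : R) : R := Rmax (Rmin z (- ln g)) (ln g).

Definition posp (a : R) : R := Rmax a 0.
Definition negp (a : R) : R := Rmax (- a) 0.

Definition Zpre (Sref P : R -> R) (tau : nat -> R) (i : nat) : R :=
  match i with
  | O => ln (Sref 0) - ln (P 0)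
  | S j => ln (Sref (tau i)) - ln (P (tau j))
  end.

Definition Jump (g : R) (Sref P : R -> R) (tau : nat -> R) (i : nat) : R :=
  clip g (Zpre Sref P tau i) - Zpre Sref P tau i.

Definition Lproc (g : R) (Sref P : R -> R) (tau : nat -> R) (m : nat) (t : R) : R :=
  sum_f_R0 (fun i => if Rle_dec (tau i) t then posp (Jump g Sref P tau i) else 0) m.

Definition Uproc (g : R) (Sref P : R -> R) (tau : nat -> R) (m : nat) (t : R) : R :=
  sum_f_R0 (fun i => if Rle_dec (tau i) t then negp (Jump g Sref P tau i) else 0) m.

(** Along the arrival times the log pool price moves only by the jumps [-J_i],
    so [ln P = ln P_0 + U - L] by telescoping, and the mispricing is the free
    path [ln S - ln P_0] pushed by [L - U] into [[ln g, -ln g]].  This is a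
    discrete Skorokhod problem: [L] increases only at arrivals where the
    mispricing is clipped at the lower barrier [ln g], and there the barrier
    constraint [ln g <= ln S - ln P_0 + L - U] is an equality.  A nondecreasing
    sum that dominates a sequence and equals it at every increase is the
    running maximum of that sequence (and of 0), which gives the supremum
    formulas; the same argument at the upper barrier handles [U]. *)

From Stdlib Require Import Reals Lra Lia.
Open Scope R_scope.

Lemma ln_le x y : 0 < x -> x <= y -> ln x <= ln y.
Proof.
  intros Hx [Hxy | <-]; [left; apply ln_increasing |]; lra.
Qed.

Lemma posp_sub_negp x : posp x - negp x = x.
Proof. unfold posp, negp, Rmax; repeat destruct Rle_dec; lra. Qed.

Lemma posp_0 : posp 0 = 0.
Proof. unfold posp; apply Rmax_left, Rle_refl. Qed.

Lemma negp_0 : negp 0 = 0.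
Proof. unfold negp; rewrite Ropp_0; apply Rmax_left, Rle_refl. Qed.

Lemma posp_ge0 x : 0 <= posp x.
Proof. unfold posp; apply Rmax_r. Qed.

Lemma negp_ge0 x : 0 <= negp x.
Proof. unfold negp; apply Rmax_r. Qed.

Lemma posp_gt0 x : 0 < posp x -> 0 < x.
Proof. unfold posp, Rmax; destruct Rle_dec; lra. Qed.

Lemma negp_gt0 x : 0 < negp x -> x < 0.
Proof. unfold negp, Rmax; destruct Rle_dec; lra. Qed.

Section Clip.

Variable g : R.
Hypothesis ln_g_le0 : ln g <= 0.

Lemma clip_bounds z : ln g <= clip g z <= - ln g.
Proof. unfold clip, Rmax, Rmin; repeat destruct Rle_dec; lra. Qed.

Lemma clip_id z : ln g <= z <= - ln g -> clip g z = z.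
Proof. unfold clip, Rmax, Rmin; repeat destruct Rle_dec; lra. Qed.

Lemma clip_lower z : z < clip g z -> clip g z = ln g.
Proof. unfold clip, Rmax, Rmin; repeat destruct Rle_dec; lra. Qed.

Lemma clip_upper z : clip g z < z -> clip g z = - ln g.
Proof. unfold clip, Rmax, Rmin; repeat destruct Rle_dec; lra. Qed.

End Clip.

Lemma sum_f_R0_le_nonneg (c : nat -> R) j n :
  (forall i, (i <= n)%nat -> 0 <= c i) -> (j <= n)%nat ->
  sum_f_R0 c j <= sum_f_R0 c n.
Proof.
  induction n as [| n IHn]; intros Hc Hjn.
  - replace j with 0%nat by lia; lra.
  - destruct (Nat.eq_dec j (S n)) as [-> | Hne]; [lra |].
    simpl; pose proof (Hc (S n) (le_n _)).
    enough (sum_f_R0 c j <= sum_f_R0 c n) by lra.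
    apply IHn; [intros i Hi; apply Hc |]; lia.
Qed.

Lemma partial_sum_is_lub_running_max (c f : nat -> R) n :
  c 0%nat = 0 ->
  (forall i, (i <= n)%nat -> 0 <= c i) ->
  (forall i, (i <= n)%nat -> f i <= sum_f_R0 c i) ->
  (forall i, (S i <= n)%nat -> 0 < c (S i) -> sum_f_R0 c (S i) = f (S i)) ->
  is_lub (fun x => exists j, (j <= n)%nat /\ x = Rmax (f j) 0) (sum_f_R0 c n).
Proof.
  intros Hc0 Hc Hdom Hhit.
  assert (Hmono : forall j k, (j <= k <= n)%nat -> sum_f_R0 c j <= sum_f_R0 c k).
  { intros j k Hjk; apply sum_f_R0_le_nonneg; [intros i Hi; apply Hc |]; lia. }
  assert (Hnonneg : forall k, (k <= n)%nat -> 0 <= sum_f_R0 c k).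
  { intros k Hk; rewrite <- Hc0; apply (Hmono 0%nat); lia. }
  assert (Hattained : forall k, (k <= n)%nat ->
            exists j, (j <= k)%nat /\ sum_f_R0 c k = Rmax (f j) 0).
  { induction k as [| k IHk]; intros Hk.
    - exists 0%nat; split; [lia |].
      rewrite Rmax_right; [exact Hc0 |].
      specialize (Hdom 0%nat Hk); simpl in Hdom; lra.
    - destruct (Rle_lt_or_eq_dec 0 (c (S k)) (Hc _ Hk)) as [Hpos | Hzero].
      + exists (S k); split; [lia |].
        rewrite Rmax_left; [apply Hhit; assumption |].
        rewrite <- Hhit by assumption; apply Hnonneg, Hk.
      + destruct (IHk ltac:(lia)) as [j [Hj Hsum]].
        exists j; split; [lia |].
        simpl; rewrite <- Hzero, Hsum; ring. }
  split.
  - intros x [j [Hj ->]]; apply Rmax_lub.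
    + apply (Rle_trans _ (sum_f_R0 c j)); [apply Hdom | apply Hmono]; lia.
    + apply Hnonneg, le_n.
  - intros b Hb.
    destruct (Hattained n (le_n _)) as [j [Hj ->]].
    apply Hb; exists j; split; [lia | reflexivity].
Qed.

Definition is_last_arrival (tau : nat -> R) (m : nat) (t : R) (k : nat) : Prop :=
  (k <= m)%nat /\ forall i, (i <= m)%nat -> (tau i <= t <-> (i <= k)%nat).

Section LastArrival.

Variables (tau : nat -> R) (m : nat) (t : R) (k : nat).
Hypothesis Hlast : is_last_arrival tau m t k.

Lemma sum_arrivals_before (f : nat -> R) :
  sum_f_R0 (fun i => if Rle_dec (tau i) t then f i else 0) m = sum_f_R0 f k.
Proof.
  destruct Hlast as [Hkm Hiff].
  enough (Htrunc : forall n, (n <= m)%nat ->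
            sum_f_R0 (fun i => if Rle_dec (tau i) t then f i else 0) n
            = sum_f_R0 f (Nat.min n k)).
  { rewrite Htrunc, Nat.min_r by lia; reflexivity. }
  induction n as [| n IHn]; intros Hn; simpl sum_f_R0 at 1.
  - destruct Rle_dec as [_ | Hnot]; [reflexivity |].
    exfalso; apply Hnot, Hiff; lia.
  - rewrite IHn by lia.
    destruct (Compare_dec.le_lt_dec (S n) k) as [Hle | Hlt].
    + destruct Rle_dec as [_ | Hnot]; [| exfalso; apply Hnot, Hiff; lia].
      rewrite !Nat.min_l by lia; reflexivity.
    + destruct Rle_dec as [Hti | _]; [apply Hiff in Hti; lia |].
      rewrite !Nat.min_r by lia; ring.
Qed.

Lemma is_lub_arrivals_before (F G : nat -> R) (l : R) :
  (forall i, (i <= m)%nat -> F i = G i) ->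
  is_lub (fun x => exists j, (j <= k)%nat /\ x = G j) l ->
  is_lub (fun x => exists i, (i <= m)%nat /\ tau i <= t /\ x = F i) l.
Proof.
  destruct Hlast as [Hkm Hiff]; intros HFG [Hub Hleast]; split.
  - intros x [i [Hi [Hti ->]]].
    rewrite HFG by assumption; apply Hub.
    exists i; split; [apply Hiff |]; auto.
  - intros b Hb; apply Hleast.
    intros x [j [Hj ->]]; apply Hb.
    exists j; split; [lia | split; [apply Hiff; lia | symmetry; apply HFG; lia]].
Qed.

End LastArrival.

Section IncreasingArrivals.

Variables (tau : nat -> R) (m : nat).
Hypothesis htau_incr : forall i, (i < m)%nat -> tau i < tau (S i).

Lemma arrival_lt i j : (i < j <= m)%nat -> tau i < tau j.
Proof.
  induction j as [| j IHj]; intros Hij; [lia |].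
  destruct (Nat.eq_dec i j) as [-> | Hne]; [apply htau_incr; lia |].
  apply (Rlt_trans _ (tau j)); [apply IHj | apply htau_incr]; lia.
Qed.

Lemma arrival_le_iff i j : (i <= m)%nat -> (j <= m)%nat ->
  (tau i <= tau j <-> (i <= j)%nat).
Proof.
  intros Hi Hj; split; intros Hij.
  - destruct (Compare_dec.le_lt_dec i j) as [| Hlt]; [assumption |].
    pose proof (arrival_lt j i ltac:(lia)); lra.
  - destruct (Nat.eq_dec i j) as [-> | Hne]; [lra |].
    left; apply arrival_lt; lia.
Qed.

Lemma is_last_arrival_at i : (i <= m)%nat -> is_last_arrival tau m (tau i) i.
Proof. intros Hi; split; [assumption |]; intros j Hj; apply arrival_le_iff; assumption. Qed.

Lemma last_arrival_exists t : tau 0%nat <= t -> exists k, is_last_arrival tau m t k.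
Proof.
  intros Ht0.
  enough (Hex : forall n, (n <= m)%nat -> exists k, (k <= n)%nat /\
            forall i, (i <= n)%nat -> (tau i <= t <-> (i <= k)%nat)).
  { destruct (Hex m (le_n _)) as [k [Hk Hiff]]; exists k; split; assumption. }
  induction n as [| n IHn]; intros Hn.
  - exists 0%nat; split; [lia |].
    intros i Hi; replace i with 0%nat by lia; split; [lia | trivial].
  - destruct (IHn ltac:(lia)) as [k [Hk Hiff]].
    destruct (Rle_dec (tau (S n)) t) as [Hle | Hgt].
    + exists (S n); split; [lia |]; intros i Hi; split; [lia |]; intros _.
      apply (Rle_trans _ (tau (S n))); [apply arrival_le_iff; lia | exact Hle].
    + exists k; split; [lia |]; intros i Hi.
      destruct (Nat.eq_dec i (S n)) as [-> | Hne]; [split; [lra | lia] |].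
      apply Hiff; lia.
Qed.

End IncreasingArrivals.

Section G3M.

Variables (g : R) (Sref P : R -> R) (m : nat) (tau : nat -> R).
Hypothesis hg : 0 < g < 1.
Hypothesis hS0 : 0 < Sref 0.
Hypothesis hP0 : 0 < P 0.
Hypothesis htau0 : tau 0%nat = 0.
Hypothesis htau_incr : forall i, (i < m)%nat -> tau i < tau (S i).
Hypothesis hPconst : forall i, (i < m)%nat ->
  forall t, tau i <= t < tau (S i) -> P t = P (tau i).
Hypothesis hPlast : forall t, tau m <= t -> P t = P (tau m).
Hypothesis hupdate : forall i, (i <= m)%nat ->
  ln (Sref (tau i)) - ln (P (tau i)) = clip g (Zpre Sref P tau i).
Hypothesis hinit : g * P 0 <= Sref 0 <= / g * P 0.

Let J := Jump g Sref P tau.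
Let L (k : nat) := sum_f_R0 (fun i => posp (J i)) k.
Let U (k : nat) := sum_f_R0 (fun i => negp (J i)) k.

Lemma ln_g_lt0 : ln g < 0.
Proof. rewrite <- ln_1; apply ln_increasing; lra. Qed.

Lemma ln_g_P0 : ln (g * P 0) = ln g + ln (P 0).
Proof. apply ln_mult; lra. Qed.

Lemma ln_invg_P0 : ln (/ g * P 0) = - ln g + ln (P 0).
Proof.
  assert (0 < / g) by (apply Rinv_0_lt_compat; lra).
  rewrite ln_mult, ln_Rinv by lra; reflexivity.
Qed.

Lemma Jump_0 : J 0%nat = 0.
Proof.
  assert (Hlow : ln (g * P 0) <= ln (Sref 0)).
  { apply ln_le; [apply Rmult_lt_0_compat |]; lra. }
  assert (Hup : ln (Sref 0) <= ln (/ g * P 0)) by (apply ln_le; lra).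
  rewrite ln_g_P0 in Hlow; rewrite ln_invg_P0 in Hup.
  unfold J, Jump; simpl Zpre.
  rewrite clip_id; [ring | pose proof ln_g_lt0; lra].
Qed.

Lemma ln_P_succ i : (S i <= m)%nat ->
  ln (P (tau (S i))) = ln (P (tau i)) - J (S i).
Proof.
  intros Hi; unfold J, Jump.
  rewrite <- hupdate by assumption; simpl Zpre; ring.
Qed.

Lemma ln_P_arrival i : (i <= m)%nat -> ln (P (tau i)) = ln (P 0) + U i - L i.
Proof.
  unfold L, U; induction i as [| i IHi]; intros Hi; simpl sum_f_R0.
  - rewrite htau0, Jump_0, posp_0, negp_0; ring.
  - rewrite ln_P_succ, IHi by lia.
    pose proof (posp_sub_negp (J (S i))); lra.
Qed.

Lemma mispricing_arrival_bounds i : (i <= m)%nat ->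
  ln g <= ln (Sref (tau i)) - ln (P 0) + L i - U i <= - ln g.
Proof.
  intros Hi.
  pose proof (clip_bounds g (Rlt_le _ _ ln_g_lt0) (Zpre Sref P tau i)) as Hclip.
  rewrite <- hupdate, ln_P_arrival in Hclip by assumption; lra.
Qed.

Lemma L_at_increase i : (S i <= m)%nat -> 0 < posp (J (S i)) ->
  L (S i) = ln g + ln (P 0) - ln (Sref (tau (S i))) + U (S i).
Proof.
  intros Hi Hpos; apply posp_gt0 in Hpos; unfold J, Jump in Hpos.
  pose proof (hupdate (S i) Hi) as Hclip.
  rewrite clip_lower, ln_P_arrival in Hclip by (assumption || lra); lra.
Qed.

Lemma U_at_increase i : (S i <= m)%nat -> 0 < negp (J (S i)) ->
  U (S i) = ln g - ln (P 0) + ln (Sref (tau (S i))) + L (S i).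
Proof.
  intros Hi Hpos; apply negp_gt0 in Hpos; unfold J, Jump in Hpos.
  pose proof (hupdate (S i) Hi) as Hclip.
  rewrite clip_upper, ln_P_arrival in Hclip
    by (assumption || pose proof ln_g_lt0; lra); lra.
Qed.

Lemma L_is_lub k : (k <= m)%nat ->
  is_lub (fun x => exists j, (j <= k)%nat /\
            x = Rmax (ln g + ln (P 0) - ln (Sref (tau j)) + U j) 0) (L k).
Proof.
  intros Hk; apply partial_sum_is_lub_running_max; cbv beta.
  - rewrite Jump_0; apply posp_0.
  - intros i _; apply posp_ge0.
  - intros i Hi; pose proof (mispricing_arrival_bounds i ltac:(lia)); fold (L i); lra.
  - intros i Hi Hpos; apply L_at_increase; [lia | assumption].
Qed.

Lemma U_is_lub k : (k <= m)%nat ->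
  is_lub (fun x => exists j, (j <= k)%nat /\
            x = Rmax (ln g - ln (P 0) + ln (Sref (tau j)) + L j) 0) (U k).
Proof.
  intros Hk; apply partial_sum_is_lub_running_max; cbv beta.
  - rewrite Jump_0; apply negp_0.
  - intros i _; apply negp_ge0.
  - intros i Hi; pose proof (mispricing_arrival_bounds i ltac:(lia)).
    fold (U i); lra.
  - intros i Hi Hpos; apply U_at_increase; [lia | assumption].
Qed.

Section AtTime.

Variables (t : R) (k : nat).
Hypothesis Hlast : is_last_arrival tau m t k.

Lemma Lproc_last_arrival : Lproc g Sref P tau m t = L k.
Proof. exact (sum_arrivals_before tau m t k Hlast _). Qed.

Lemma Uproc_last_arrival : Uproc g Sref P tau m t = U k.
Proof. exact (sum_arrivals_before tau m t k Hlast _). Qed.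

Lemma P_last_arrival : P t = P (tau k).
Proof.
  destruct Hlast as [Hkm Hiff].
  assert (Htk : tau k <= t) by (apply Hiff; lia).
  destruct (Nat.eq_dec k m) as [-> | Hne]; [apply hPlast, Htk |].
  apply hPconst; [lia | split; [exact Htk |]].
  apply Rnot_le_lt; intros Ht; apply Hiff in Ht; lia.
Qed.

Lemma ln_P_last_arrival :
  ln (P t) = ln (P 0) + Uproc g Sref P tau m t - Lproc g Sref P tau m t.
Proof.
  rewrite P_last_arrival, Lproc_last_arrival, Uproc_last_arrival.
  apply ln_P_arrival, Hlast.
Qed.

End AtTime.

Lemma Lproc_is_lub t k : is_last_arrival tau m t k ->
  is_lub (fun x => exists i, (i <= m)%nat /\ tau i <= t /\
            x = negp (- ln (g * P 0) + ln (Sref (tau i)) - Uproc g Sref P tau m (tau i)))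
         (Lproc g Sref P tau m t).
Proof.
  intros Hlast; rewrite (Lproc_last_arrival t k Hlast).
  apply (is_lub_arrivals_before tau m t k Hlast)
    with (G := fun j => Rmax (ln g + ln (P 0) - ln (Sref (tau j)) + U j) 0).
  - intros i Hi.
    rewrite (Uproc_last_arrival (tau i) i (is_last_arrival_at tau m htau_incr i Hi)).
    unfold negp; rewrite ln_g_P0; f_equal; ring.
  - apply L_is_lub, Hlast.
Qed.

Lemma Uproc_is_lub t k : is_last_arrival tau m t k ->
  is_lub (fun x => exists i, (i <= m)%nat /\ tau i <= t /\
            x = negp (ln (/ g * P 0) - ln (Sref (tau i)) - Lproc g Sref P tau m (tau i)))
         (Uproc g Sref P tau m t).
Proof.
  intros Hlast; rewrite (Uproc_last_arrival t k Hlast).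
  apply (is_lub_arrivals_before tau m t k Hlast)
    with (G := fun j => Rmax (ln g - ln (P 0) + ln (Sref (tau j)) + L j) 0).
  - intros i Hi.
    rewrite (Lproc_last_arrival (tau i) i (is_last_arrival_at tau m htau_incr i Hi)).
    unfold negp; rewrite ln_invg_P0; f_equal; ring.
  - apply U_is_lub, Hlast.
Qed.

End G3M.

Theorem mainTheorem1
  (g : R) (Sref P : R -> R) (m : nat) (tau : nat -> R) (T : R)
  (hg : 0 < g < 1)
  (hS : forall t, 0 <= t -> 0 < Sref t)
  (hP : forall t, 0 <= t -> 0 < P t)
  (htau0 : tau 0%nat = 0)
  (htau_incr : forall i, (i < m)%nat -> tau i < tau (S i))
  (htauT : tau m <= T)
  (hPconst : forall i, (i < m)%nat -> forall t, tau i <= t < tau (S i) -> P t = P (tau i))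
  (hPlast : forall t, tau m <= t -> P t = P (tau m))
  (hupdate : forall i, (i <= m)%nat ->
     ln (Sref (tau i)) - ln (P (tau i)) = clip g (Zpre Sref P tau i))
  (hinit : g * P 0 <= Sref 0 <= / g * P 0) :
  forall t, 0 <= t ->
    ln (P t) = ln (P 0) + Uproc g Sref P tau m t - Lproc g Sref P tau m t /\
    ln (Sref t / P t) = ln (Sref t) - ln (P 0) + Lproc g Sref P tau m t - Uproc g Sref P tau m t /\
    is_lub (fun x => exists i, (i <= m)%nat /\ tau i <= t /\
              x = negp (- ln (g * P 0) + ln (Sref (tau i)) - Uproc g Sref P tau m (tau i)))
           (Lproc g Sref P tau m t) /\
    is_lub (fun x => exists i, (i <= m)%nat /\ tau i <= t /\
              x = negp (ln (/ g * P 0) - ln (Sref (tau i)) - Lproc g Sref P tau m (tau i)))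
           (Uproc g Sref P tau m t).
Proof.
  intros t ht.
  assert (hS0 : 0 < Sref 0) by (apply hS, Rle_refl).
  assert (hP0 : 0 < P 0) by (apply hP, Rle_refl).
  destruct (last_arrival_exists tau m htau_incr t) as [k Hlast]; [rewrite htau0; exact ht |].
  assert (Hprice : ln (P t) = ln (P 0) + Uproc g Sref P tau m t - Lproc g Sref P tau m t)
    by (eapply ln_P_last_arrival; eassumption).
  split; [exact Hprice |].
  split.
  - assert (0 < / P t) by (apply Rinv_0_lt_compat, hP, ht).
    unfold Rdiv; rewrite ln_mult, ln_Rinv, Hprice by auto; ring.
  - split; [eapply Lproc_is_lub | eapply Uproc_is_lub]; eassumption.
Qed.
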